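(* Let $0<\varepsilon<1/4$ and $3\varepsilon\le\delta\le1$ be real numbers, and let $m,k$ be positive integers with $k\le\delta m/4$. Set $r=(10/\varepsilon^2)\log(1/\varepsilon)$. Let $T_1,\dots,T_l$ be rooted trees, each on at most $t\le m/2$ vertices, such that every level set of every $T_i$ has at most $k$ vertices, and let $e_T=\sum_i e(T_i)$. Let $G$ be a balanced bipartite graph with $n$ vertices in each part and bipartite density $d_G$ (so $e(G)=d_Gn^2$), such that $d_Gn^2\ge e_T+(\delta+\varepsilon)n^2$. If $n\ge m\cdot\exp\big(r\log(1/(\delta+\varepsilon))\big)$, then $G$ contains pairwise edge-disjoint subgraphs isomorphic to $T_1,\dots,T_l$ respectively.
   Context: $\log$ is the natural logarithm. For a rooted tree with root $r$, $N^*(x)$ denotes the set of children of $x$; the level sets are $L_1=\{r\}$ and $L_{i+1}=\bigcup_{x\in L_i}N^*(x)$. A bipartite graph is balanced if its parts have equal size; the bipartite density of a bipartite graph with parts $A,B$ is $e(A,B)/(|A||B|)$. *)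

From mathcomp Require Import all_boot all_order all_algebra.
From mathcomp Require Import all_classical all_reals all_analysis.
Set Implicit Arguments. Unset Strict Implicit. Unset Printing Implicit Defensive.

Definition edges (U : finType) (e : rel U) : {set {set U}} :=
  [set [set p.1; p.2] | p in [set p : U * U | e p.1 p.2]].

Definition is_tree (U : finType) (e : rel U) : Prop :=
  symmetric e /\ irreflexive e /\ (forall x y, connect e x y) /\
  #|edges e| = #|U| - 1.

Fixpoint reached (U : finType) (e : rel U) (r : U) (i : nat) : {set U} :=
  match i with
  | 0 => [set r]
  | i'.+1 => reached e r i' :|: [set y | [exists x in reached e r i', e x y]]
  end.

(* level_set e r i = L_{i+1} in the paper: L_1 = {r}, L_{i+1} = children of L_i. *)
Definition level_set (U : finType) (e : rel U) (r : U) (i : nat) : {set U} :=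
  match i with
  | 0 => [set r]
  | i'.+1 => reached e r i'.+1 :\: reached e r i'
  end.

(* Balanced bipartite graph with parts 'I_n (left) and 'I_n (right), given by
   adj a b = "left vertex a adjacent to right vertex b". Vertex type: 'I_n + 'I_n. *)
Definition bip_adj (n : nat) (adj : 'I_n -> 'I_n -> bool) : rel ('I_n + 'I_n)%type :=
  fun u v => match u, v with
             | inl a, inr b => adj a b
             | inr b, inl a => adj a b
             | _, _ => false
             end.

Definition bip_edges (n : nat) (adj : 'I_n -> 'I_n -> bool) : nat :=
  #|[set p : 'I_n * 'I_n | adj p.1 p.2]|.

Definition embedding (U V : finType) (e : rel U) (g : rel V) (f : U -> V) : Prop :=
  injective f /\ forall x y, e x y -> g (f x) (f y).

Definition image_edges (U V : finType) (e : rel U) (f : U -> V) : {set {set V}} :=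
  [set [set f p.1; f p.2] | p in [set p : U * U | e p.1 p.2]].

From mathcomp Require Import all_boot all_order all_algebra.
From mathcomp Require Import reals sequences exp.
From mathcomp Require Import zify ring lra.
Import Order.TTheory GRing.Theory Num.Theory.
Set Implicit Arguments. Unset Strict Implicit. Unset Printing Implicit Defensive.

(* The trees are packed greedily.  As long as the current graph has at least
   2nt edges, its average degree is at least 2t, so deleting vertices of
   degree < t one at a time leaves a nonempty subgraph of minimum degree >= t;
   a tree on at most t vertices embeds in it vertex by vertex, since each new
   leaf has a single already embedded neighbour, whose image has a free
   neighbour.  Delete the edges of the copy and continue with the next tree.
   The hypotheses give e(G) >= e_T + 2nt, because r >= 1 and delta + eps <= 1
   force n >= m / (delta + eps) >= 2t / (delta + eps). *)

Local Open Scope nat_scope.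

Section Degree.
Variables (V : finType) (g : rel V).
Hypothesis gsym : symmetric g.
Hypothesis girr : irreflexive g.

Definition deg (W : {set V}) u := \sum_(v in W) (g u v : nat).
Definition deg_sum (W : {set V}) := \sum_(u in W) deg W u.

Lemma degD1 (W : {set V}) w : w \in W -> deg W w = deg (W :\ w) w.
Proof. by move=> wW; rewrite /deg (big_setD1 _ wW) /= girr add0n. Qed.

Lemma deg_sumD1 (W : {set V}) w : w \in W ->
  deg_sum W = deg_sum (W :\ w) + 2 * deg W w.
Proof.
move=> wW; rewrite /deg_sum (big_setD1 _ wW).
have -> : \sum_(u in W :\ w) deg W u =
          \sum_(u in W :\ w) ((g u w : nat) + deg (W :\ w) u).
  by apply: eq_bigr => u uW; rewrite /deg (big_setD1 _ wW).
rewrite big_split /=.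
have -> : \sum_(u in W :\ w) (g u w : nat) = deg W w.
  by rewrite (degD1 wW) /deg; apply: eq_bigr => u _; rewrite gsym.
lia.
Qed.

(* Deleting a vertex of degree < d lowers deg_sum W + 2 |W| by at most 2d, so
   the hypothesis survives until no such vertex is left. *)
Lemma exists_min_deg_subset d (W : {set V}) :
  2 * d * #|W| < deg_sum W + 2 * #|W| ->
  exists2 W', W' != set0 & forall u, u \in W' -> d <= deg W' u.
Proof.
move: {2}#|W| (leqnn #|W|) => N; elim: N W => [|N IH] W hN h.
  have W0 : W = set0 by apply/eqP; rewrite -cards_eq0; lia.
  by move: h; rewrite W0 /deg_sum big_set0 cards0 muln0.
have [mindeg | ] := boolP [forall (u | u \in W), d <= deg W u].
  exists W; last exact/forall_inP.
  by apply: contraTneq h => ->; rewrite /deg_sum big_set0 cards0 muln0.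
rewrite negb_forall_in => /exists_inP [w wW]; rewrite -ltnNge => hw.
apply: (IH (W :\ w)); first by move: hN; rewrite (cardsD1 w W) wW; lia.
by move: h; rewrite (deg_sumD1 wW) (cardsD1 w W) wW; nia.
Qed.

Lemma exists_nbr_notin (W : {set V}) u (A : {set V}) : #|A| < deg W u ->
  exists v, [/\ v \in W, g u v & v \notin A].
Proof.
move=> h; case: (pickP [pred v | (v \in W) && g u v && (v \notin A)]).
  by move=> v /= /andP [/andP [vW guv] vA]; exists v.
move=> none; suff : deg W u <= #|A| by lia.
rewrite /deg -sum1_card (big_mkcond (mem W)) (big_mkcond (mem A)) /=.
apply: leq_sum => v _.
by move: (none v) => /=; case: (v \in W); case: (g u v); case: (v \in A).
Qed.

End Degree.

Section Tree.
Variables (U : finType) (e : rel U).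
Hypothesis tree : is_tree e.

Definition induced_edges (X : {set U}) := [set s in edges e | s \subset X].

(* In a tree the subgraph induced on X is a forest, so this says it is connected. *)
Definition subtree (X : {set U}) := #|X| <= #|induced_edges X| + 1.

Lemma in_edges x y : e x y -> [set x; y] \in edges e.
Proof. by move=> h; apply/imsetP; exists (x, y) => //; rewrite inE. Qed.

Lemma connect_exit a b (X : {set U}) : connect e a b -> a \in X -> b \notin X ->
  exists x y, [/\ x \in X, y \notin X & e x y].
Proof.
move=> /connectP [p pth ->]; elim: p a pth => [|c p IH] a /=; first by move=> _ ->.
move=> /andP [eac pth] aX bX.
case cX: (c \in X); first exact: (IH c pth cX bX).
by exists a, c; rewrite cX.
Qed.

Lemma exists_exit_edge (X : {set U}) : X != set0 -> X != setT ->
  exists x y, [/\ x \in X, y \notin X & e x y].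
Proof.
case/set0Pn => a aX; rewrite eqEsubset subsetT /= => /subsetPn [b _ bX].
by have [_ [_ [conn _]]] := tree; apply: connect_exit (conn a b) aX bX.
Qed.

Lemma induced_edges_sub X : induced_edges X \subset edges e.
Proof. by apply/subsetP => s; rewrite inE => /andP []. Qed.

Lemma card_induced_edges_grow (X : {set U}) y (S : {set {set U}}) : y \notin X ->
  S \subset edges e -> (forall s, s \in S -> (y \in s) && (s \subset y |: X)) ->
  #|induced_edges X| + #|S| <= #|induced_edges (y |: X)|.
Proof.
move=> yX SE hS.
have dis : induced_edges X :&: S = set0.
  apply/setP => s; rewrite !inE; apply/negbTE/negP => /andP [/andP [_ sX] sS].
  by move: (hS s sS) => /andP [ys _]; move: yX; rewrite (subsetP sX y ys).
rewrite -cardsUI dis cards0 addn0; apply: subset_leq_card.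
apply/subsetP => s; rewrite !inE => /orP [/andP [sE sX] | sS].
  by rewrite sE /=; apply: (subset_trans sX); exact: subsetU1.
by move: (hS s sS) => /andP [_ ->]; rewrite (subsetP SE s sS).
Qed.

Lemma card_induced_edges_add1 (X : {set U}) x y : x \in X -> y \notin X -> e x y ->
  #|induced_edges X| + 1 <= #|induced_edges (y |: X)|.
Proof.
move=> xX yX exy; rewrite -(cards1 [set x; y]).
apply: card_induced_edges_grow => //; first by rewrite sub1set in_edges.
move=> s; rewrite inE => /eqP ->; rewrite !inE eqxx orbT /=.
by apply/subsetP => z; rewrite !inE => /orP [/eqP -> | /eqP ->]; rewrite ?xX ?eqxx ?orbT.
Qed.

Lemma card_induced_edges_compl (X : {set U}) : X != set0 ->
  #|induced_edges X| + (#|U| - #|X|) <= #|edges e|.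
Proof.
move: {2}(#|U| - #|X|) (leqnn (#|U| - #|X|)) => k.
elim: k X => [|k IH] X hk X0.
  have := subset_leq_card (induced_edges_sub X); lia.
have [XT | XnT] := eqVneq X setT.
  by rewrite XT cardsT subnn addn0; exact: subset_leq_card (induced_edges_sub _).
have [x [y [xX yX exy]]] := exists_exit_edge X0 XnT.
have grow := card_induced_edges_add1 xX yX exy.
have cU : #|y |: X| = #|X|.+1 by rewrite cardsU1 yX.
have := max_card (mem (y |: X)); rewrite cU => XltU.
have := IH (y |: X); rewrite cU -card_gt0 cU; lia.
Qed.

Lemma subtreeU1 (X : {set U}) x y : subtree X -> x \in X -> y \notin X -> e x y ->
  subtree (y |: X).
Proof.
rewrite /subtree => sX xX yX exy; have := card_induced_edges_add1 xX yX exy.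
by rewrite cardsU1 yX; lia.
Qed.

(* Two neighbours of y in X would give y |: X more edges than a subforest of
   the tree can have. *)
Lemma subtree_unique_nbr (X : {set U}) x y z : subtree X -> x \in X -> y \notin X ->
  e x y -> z \in X -> e y z -> z = x.
Proof.
move=> sX xX yX exy zX eyz; apply/eqP/negPn/negP => zx.
have [esym [_ [_ ecard]]] := tree.
have card2 : #|[set [set x; y]; [set z; y]]| = 2.
  rewrite cards2; case: eqP => // E.
  have : x \in [set z; y] by rewrite -E !inE eqxx.
  rewrite !inE => /orP [/eqP xz | /eqP xy]; first by rewrite xz eqxx in zx.
  by move: yX; rewrite -xy xX.
have : #|induced_edges X| + 2 <= #|induced_edges (y |: X)|.
  rewrite -card2; apply: card_induced_edges_grow => //.
    apply/subsetP => s; rewrite !inE => /orP [/eqP -> | /eqP ->];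
      by apply: in_edges; rewrite // esym.
  move=> s; rewrite !inE => /orP [/eqP -> | /eqP ->]; rewrite !inE eqxx orbT /=;
    by apply/subsetP => w; rewrite !inE => /orP [/eqP -> | /eqP ->];
      rewrite ?xX ?zX ?eqxx ?orbT.
have := card_induced_edges_compl (X := y |: X); rewrite -card_gt0 cardsU1 yX.
move: sX; rewrite /subtree; have := max_card (mem (y |: X)); rewrite cardsU1 yX.
lia.
Qed.

End Tree.

Section Embed.
Variables (U : finType) (e : rel U) (V : finType) (g : rel V).
Hypothesis tree : is_tree e.
Hypothesis gsym : symmetric g.
Variable W : {set V}.
Hypothesis W0 : W != set0.
Hypothesis min_deg : forall u, u \in W -> #|U| <= deg g W u.

Definition partial_embedding (X : {set U}) (f : U -> V) :=
  [/\ subtree e X, {in X &, injective f}, {in X, forall x, f x \in W}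
    & {in X &, forall x y, e x y -> g (f x) (f y)}].

Lemma partial_embeddingU1 (X : {set U}) f : partial_embedding X f -> X != setT ->
  exists y f', y \notin X /\ partial_embedding (y |: X) f'.
Proof.
move=> [sX finj fW fe] XnT; have [esym [eirr _]] := tree.
have [/eqP X0 | XnE] := boolP (X == set0).
  have [v vW] := set0Pn _ W0.
  move: XnT; rewrite X0 eqEsubset subsetT /= => /subsetPn [y _ _].
  exists y, (fun=> v); split; first by rewrite inE.
  rewrite setU0; split.
  - by rewrite /subtree cards1 leq_addl.
  - by move=> a b; rewrite !inE => /eqP -> /eqP ->.
  - by move=> a; rewrite inE.
  - by move=> a b; rewrite !inE => /eqP -> /eqP ->; rewrite eirr.
have [x [y [xX yX exy]]] := exists_exit_edge tree XnE XnT.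
have [v [vW gv vX]] : exists v, [/\ v \in W, g (f x) v & v \notin f @: X].
  apply: exists_nbr_notin; apply: leq_ltn_trans (leq_imset_card f X) _.
  apply: leq_trans (min_deg (fW x xX)).
  by rewrite -cardsT; apply: proper_card; rewrite properT.
have ny u : u \in X -> (u == y) = false.
  by move=> uX; apply/negbTE; apply: contraNneq yX => <-.
exists y, (fun u => if u == y then v else f u); split => //; split.
- exact: subtreeU1 sX xX yX exy.
- move=> u1 u2; rewrite !in_setU1 => /orP [/eqP -> | u1X] /orP [/eqP -> | u2X];
    rewrite ?eqxx ?ny //; last exact: finj.
  + by move=> E; move: vX; rewrite E imset_f.
  + by move=> E; move: vX; rewrite -E imset_f.
- move=> u; rewrite in_setU1 => /orP [/eqP -> | uX]; first by rewrite eqxx.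
  by rewrite ny // fW.
- have nbr := subtree_unique_nbr tree sX xX yX exy.
  move=> u1 u2; rewrite !in_setU1 => /orP [/eqP -> | u1X] /orP [/eqP -> | u2X];
    rewrite ?eqxx ?ny //; last exact: fe.
  + by rewrite eirr.
  + by move=> eyu; rewrite (nbr _ u2X eyu) gsym.
  + by move=> euy; rewrite (nbr _ u1X) // esym.
Qed.

Lemma partial_embedding_card s : s <= #|U| ->
  exists (X : {set U}) (f : U -> V), #|X| = s /\ partial_embedding X f.
Proof.
elim: s => [_ | s IH hs].
  have [v _] := set0Pn _ W0.
  exists set0, (fun=> v); rewrite cards0; split=> //.
  by split=> [|x|x|x]; rewrite ?inE // /subtree cards0.
have [X [f [cX pX]]] := IH (ltnW hs).
have XnT : X != setT by apply: contraTneq hs => XT; rewrite -cX XT cardsT ltnn.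
have [y [f' [yX pX']]] := partial_embeddingU1 pX XnT.
by exists (y |: X), f'; rewrite cardsU1 yX cX.
Qed.

Lemma tree_embedding : exists f : U -> V, embedding e g f.
Proof.
have [X [f [cX [_ finj _ fe]]]] := partial_embedding_card (leqnn #|U|).
have XT : X = setT by apply/eqP; rewrite eqEcard subsetT cardsT cX leqnn.
by exists f; split => [u1 u2 | x y]; [apply: finj | apply: fe]; rewrite XT in_setT.
Qed.

End Embed.

Lemma bip_sym n (adj : 'I_n -> 'I_n -> bool) : symmetric (bip_adj adj).
Proof. by case=> a; case=> b. Qed.

Lemma bip_irr n (adj : 'I_n -> 'I_n -> bool) : irreflexive (bip_adj adj).
Proof. by case. Qed.

Lemma deg_sum_bip n (adj : 'I_n -> 'I_n -> bool) :
  deg_sum (bip_adj adj) [set: 'I_n + 'I_n] = 2 * bip_edges adj.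
Proof.
have sumT (T : finType) (F : T -> nat) : \sum_(u in [set: T]) F u = \sum_u F u.
  by apply: eq_bigl => u; rewrite in_setT.
have -> : bip_edges adj = \sum_(p : 'I_n * 'I_n) (adj p.1 p.2 : nat).
  rewrite /bip_edges -sum1dep_card big_mkcond.
  by apply: eq_bigr => p _; case: (adj _ _).
rewrite /deg_sum /deg sumT.
under eq_bigr do rewrite sumT.
rewrite big_sumType /=.
under eq_bigr do rewrite big_sumType /= big1 // add0n.
under [X in _ + X]eq_bigr do rewrite big_sumType /= [X in _ + X]big1 // addn0.
rewrite -(pair_big predT predT (fun a b => (adj a b : nat))) /=.
rewrite [X in _ + X]exchange_big /=; lia.
Qed.

Lemma bip_edges_le n (adj : 'I_n -> 'I_n -> bool) : bip_edges adj <= n * n.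
Proof.
by rewrite /bip_edges -[X in _ <= X * _](card_ord n) -[X in _ <= _ * X](card_ord n)
  -card_prod max_card.
Qed.

(* Otherwise [eT i] would read i as an implicit argument. *)
Unset Implicit Arguments.
Section Packing.
Variables (l n t : nat) (U : 'I_l -> finType) (eT : forall i, rel (U i)).
Hypothesis n0 : 0 < n.
Hypothesis trees : forall i, is_tree (eT i).
Hypothesis sizes : forall i, #|U i| <= t.

Local Notation V := ('I_n + 'I_n)%type.

Definition remove_edges (adj : 'I_n -> 'I_n -> bool) (E : {set {set V}}) :=
  fun a b => adj a b && ([set (inl a : V); inr b] \notin E).

Lemma bip_edges_remove adj E : bip_edges adj <= bip_edges (remove_edges adj E) + #|E|.
Proof.
rewrite /bip_edges.
set A' := [set p : 'I_n * 'I_n | remove_edges adj E p.1 p.2].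
set B := [set p : 'I_n * 'I_n | [set (inl p.1 : V); inr p.2] \in E].
have sub : [set p : 'I_n * 'I_n | adj p.1 p.2] \subset A' :|: B.
  apply/subsetP => p; rewrite !inE /remove_edges.
  by case: (adj _ _) => //=; case: (_ \in E).
have cardB : #|B| <= #|E|.
  have inj : {in B &, injective (fun p : 'I_n * 'I_n => [set (inl p.1 : V); inr p.2])}.
    move=> [a b] [a' b'] _ _ /= E'.
    have : (inl a : V) \in [set inl a'; inr b'] by rewrite -E' !inE eqxx.
    rewrite !inE => /orP [/eqP [] -> | //].
    have : (inr b : V) \in [set inl a'; inr b'] by rewrite -E' !inE eqxx orbT.
    by rewrite !inE => /orP [// | /eqP [] ->].
  rewrite -(card_in_imset inj); apply: subset_leq_card.
  by apply/subsetP => s /imsetP [p]; rewrite inE => pE ->.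
by have := subset_leq_card sub; have := cardsUI A' B; lia.
Qed.

Lemma card_image_edges (W : finType) (e : rel W) (f : W -> V) :
  #|image_edges e f| <= #|edges e|.
Proof.
have -> : image_edges e f = (fun s : {set W} => f @: s) @: edges e.
  rewrite /image_edges /edges -imset_comp; apply: eq_imset => p /=.
  by rewrite imsetU1 imset_set1.
exact: leq_imset_card.
Qed.

Lemma bip_edges_remove_image adj (W : finType) (e : rel W) (f : W -> V) :
  bip_edges adj <= bip_edges (remove_edges adj (image_edges e f)) + #|edges e|.
Proof.
by apply: leq_trans (bip_edges_remove adj (image_edges e f)) _;
  rewrite leq_add2l card_image_edges.
Qed.

Lemma embedding_remove_edges adj E (W : finType) (e : rel W) (f : W -> V) :
  embedding e (bip_adj (remove_edges adj E)) f ->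
  embedding e (bip_adj adj) f /\ [disjoint E & image_edges e f].
Proof.
move=> [finj fe]; split.
  by split=> // x y /fe; case: (f x) => a; case: (f y) => b //= /andP [].
rewrite disjoint_subset; apply/subsetP => s sE.
rewrite inE; apply/negP => /imsetP [p]; rewrite inE => ep sdef.
move: (fe _ _ ep); rewrite sdef in sE; move: sE.
case: (f p.1) => a; case: (f p.2) => b //=; rewrite /remove_edges.
  by move=> H /andP [_]; rewrite H.
by rewrite [[set inr a; inl b]]setUC => H /andP [_]; rewrite H.
Qed.

Definition packing adj (S : {set 'I_l}) (f : forall i, U i -> V) :=
  (forall i, i \in S -> embedding (eT i) (bip_adj adj) (f i)) /\
  (forall i j, i \in S -> j \in S -> i != j ->
     [disjoint image_edges (eT i) (f i) & image_edges (eT j) (f j)]).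

Definition patch (i0 : 'I_l) (g0 : U i0 -> V) (f : forall i, U i -> V) :
  forall i, U i -> V :=
  fun i => match i0 =P i with
           | ReflectT E => eq_rect i0 (fun j => U j -> V) g0 i E
           | ReflectF _ => f i end.

Lemma patch_id i0 g0 f : patch i0 g0 f i0 = g0.
Proof.
rewrite /patch; case: (i0 =P i0) => // E.
by rewrite (eq_irrelevance E (erefl i0)).
Qed.

Lemma patch_ne i0 g0 f i : i0 != i -> patch i0 g0 f i = f i.
Proof. by rewrite /patch; case: (i0 =P i) => // E; rewrite E eqxx. Qed.

Lemma packingU1 adj S i0 (g0 : U i0 -> V) f :
  embedding (eT i0) (bip_adj adj) g0 ->
  packing (remove_edges adj (image_edges (eT i0) g0)) S f ->
  packing adj (i0 |: S) (patch i0 g0 f).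
Proof.
move=> g0emb [fe fd].
have fS j : j \in i0 |: S -> i0 != j ->
    embedding (eT j) (bip_adj adj) (f j) /\
    [disjoint image_edges (eT i0) g0 & image_edges (eT j) (f j)].
  by rewrite in_setU1 eq_sym => /orP [-> // | jS] _; apply/embedding_remove_edges/fe.
split=> [i iS | i j iS jS ij].
  by have [<- | ne] := eqVneq i0 i; rewrite ?patch_id ?patch_ne //; case: (fS i).
have [ei | ni] := eqVneq i0 i; have [ej | nj] := eqVneq i0 j.
- by move: ij; rewrite -ei -ej eqxx.
- by rewrite -ei patch_id patch_ne //; case: (fS j).
- by rewrite -ej patch_id patch_ne // disjoint_sym; case: (fS i).
- rewrite !patch_ne //; apply: fd => //;
    by move: iS jS; rewrite !in_setU1 ![_ == i0]eq_sym (negbTE ni) (negbTE nj).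
Qed.

Set Implicit Arguments.
Lemma exists_packing (S : {set 'I_l}) adj :
  \sum_(i in S) #|edges (eT i)| + 2 * n * t <= bip_edges adj ->
  exists f, packing adj S f.
Proof.
move: {2}#|S| (leqnn #|S|) => N; elim: N S adj => [|N IH] S adj hN hE;
  (have [S0 | [i0 i0S]] := set_0Vmem S; first by
    exists (fun i _ => inl (Ordinal n0)); rewrite S0; split=> [i|i j]; rewrite inE).
  by move: hN; rewrite leqn0 cards_eq0 => /eqP S0; rewrite S0 in_set0 in i0S.
have [W W0 hW] := exists_min_deg_subset (bip_sym adj) (bip_irr adj) (d := t)
  (W := [set: V]) ltac:(rewrite deg_sum_bip cardsT card_sum card_ord; nia).
have [g0 g0emb] := tree_embedding (trees i0) (bip_sym adj) W0
  (fun u uW => leq_trans (sizes i0) (hW u uW)).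
have cardS : #|S :\ i0| <= N by move: hN; rewrite (cardsD1 i0 S) i0S.
have hE' : \sum_(i in S :\ i0) #|edges (eT i)| + 2 * n * t <=
           bip_edges (remove_edges adj (image_edges (eT i0) g0)).
  have := bip_edges_remove_image adj _ (eT i0) g0.
  by move: hE; rewrite (big_setD1 _ i0S) /=; lia.
have [f pf] := IH (S :\ i0) (remove_edges adj (image_edges (eT i0) g0)) cardS hE'.
by exists (patch i0 g0 f); rewrite -(setD1K i0S); apply: packingU1.
Qed.

End Packing.

Local Open Scope ring_scope.

Lemma ge1_sq_ln_inv (R : realType) (eps : R) : 0 < eps -> eps < 1 / 4 ->
  1 <= 10 / eps ^+ 2 * ln (1 / eps).
Proof.
move=> e0 e4.
have hl : ln eps <= eps - 1.
  by have := @le_ln1Dx R (eps - 1); rewrite (addrC 1) subrK; apply; lra.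
have -> : ln (1 / eps) = - ln eps by rewrite div1r lnV // posrE.
have he2 : 0 < eps ^+ 2 <= 1 / 16 by rewrite expr2; apply/andP; split; nra.
have : 10 <= 10 / eps ^+ 2 by rewrite ler_pdivlMr; nra.
nra.
Qed.

Lemma inv_le_expR_mul_ln (R : realType) (r x : R) : 1 <= r -> 0 < x <= 1 ->
  1 / x <= expR (r * ln (1 / x)).
Proof.
move=> r1 /andP [x0 x1].
have lx : 0 <= ln (1 / x) by apply: ln_ge0; rewrite ler_pdivlMr //; lra.
rewrite -{1}(@lnK R (1 / x)) ?posrE ?divr_gt0 // ler_expR; nra.
Qed.

Lemma density_le1 (R : realType) (x : R) (n be eT : nat) : (0 < n)%N ->
  (be <= n * n)%N -> eT%:R + x * n%:R ^+ 2 <= be%:R -> x <= 1.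
Proof.
move=> n0 ben hbe; have nsq : (0 : R) < n%:R ^+ 2 by rewrite exprn_gt0 ?ltr0n.
have : (be%:R : R) <= n%:R ^+ 2 by rewrite expr2 -natrM ler_nat.
have : (0 : R) <= eT%:R by [].
move: nsq hbe; move: (n%:R ^+ 2) => N; nra.
Qed.

Lemma edge_surplus (R : realType) (x r : R) (m t n be eT : nat) :
  0 < x -> 1 <= r -> (0 < m)%N -> t%:R <= m%:R / 2 :> R -> (be <= n * n)%N ->
  eT%:R + x * n%:R ^+ 2 <= be%:R -> m%:R * expR (r * ln (1 / x)) <= n%:R ->
  (0 < n)%N /\ (eT + 2 * n * t <= be)%N.
Proof.
move=> x0 r1 m0 tm ben hbe hn.
have m0R : (0 : R) < m%:R by rewrite ltr0n.
have n0 : (0 < n)%N.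
  by rewrite -(ltr0n R); apply: lt_le_trans hn; rewrite mulr_gt0 ?expR_gt0.
have x1 := density_le1 n0 ben hbe.
have hinv : 1 / x <= expR (r * ln (1 / x)).
  by apply: inv_le_expR_mul_ln; rewrite // x0 x1.
have hmx : m%:R / x <= n%:R.
  by apply: le_trans hn; rewrite -[m%:R / x]mul1r mulrCA ler_pM2l.
have hxn : m%:R <= x * n%:R by rewrite mulrC -ler_pdivrMr.
split=> //; rewrite -(ler_nat R) natrD !natrM; apply: le_trans hbe.
rewrite lerD2l.
have -> : (2%:R * n%:R * t%:R : R) = 2 * t%:R * n%:R by ring.
rewrite expr2 mulrA ler_wpM2r //; lra.
Qed.

Theorem theorem4p2 (R : realType) (eps delta : R) (m k t l : nat)
  (U : 'I_l -> finType) (eT : forall i, rel (U i)) (root : forall i, U i)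
  (n : nat) (adj : 'I_n -> 'I_n -> bool) :
  0 < eps -> eps < 1 / 4 ->
  3 * eps <= delta -> delta <= 1 ->
  (0 < m)%N -> (0 < k)%N ->
  (k%:R : R) <= delta * m%:R / 4 ->
  (t%:R : R) <= m%:R / 2 ->
  (forall i, is_tree (eT i)) ->
  (forall i, (#|U i| <= t)%N) ->
  (forall i j, (#|level_set (eT i) (root i) j| <= k)%N) ->
  let e_T := (\sum_(i < l) #|edges (eT i)|)%N in
  let r := 10 / eps ^+ 2 * ln (1 / eps) in
  ((bip_edges adj)%:R : R) >= e_T%:R + (delta + eps) * (n%:R) ^+ 2 ->
  (n%:R : R) >= m%:R * expR (r * ln (1 / (delta + eps))) ->
  exists f : forall i, U i -> ('I_n + 'I_n)%type,
    (forall i, embedding (eT i) (bip_adj adj) (f i)) /\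
    (forall i j, i != j -> [disjoint image_edges (eT i) (f i) & image_edges (eT j) (f j)]).
Proof.
move=> e0 e4 ed _ m0 _ _ ht trees sizes _ e_T r hbe hn.
have x0 : 0 < delta + eps by lra.
have [n0 hE] := edge_surplus x0
  (ge1_sq_ln_inv e0 e4) m0 ht (bip_edges_le adj) hbe hn.
have [f [fe fd]] := exists_packing n0 trees sizes (S := setT) (adj := adj)
  ltac:(by rewrite (eq_bigl _ _ (fun i => in_setT i))).
by exists f; split=> [i | i j]; [apply: fe | apply: fd]; rewrite in_setT.
Qed.
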